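(* There is no computable enumeration without repetitions $(\psi_x)_{x\in\omega}$ of all unary partial computable functions such that the partial applicative structure $(\omega,\cdot)$ with $n\cdot m\simeq\psi_n(m)$ is a partial combinatory algebra (equivalently, contains elements $k,s$ with $kab=a$, $sab\downarrow$ and $sabc\simeq ac(bc)$ for all $a,b,c\in\omega$).
   Context: A partial applicative structure is a set with a partial binary application $ab$, left associative and strict; $\simeq$ means both sides undefined or both defined and equal. It is a partial combinatory algebra if for every term $t(x_1,\dots,x_n,x)$ there is $b$ with $ba_1\cdots a_n\downarrow$ and $ba_1\cdots a_na\simeq t(a_1,\dots,a_n,a)$ for all $a_i,a$; this is equivalent to the existence of $k,s$ as in the claim. A computable enumeration means $(x,y)\mapsto\psi_x(y)$ is partial computable; without repetitions means each unary partial computable function occurs exactly once. *)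

From Stdlib Require Import Arith List.
Import ListNotations.

Inductive code : Type :=
| Zero : code
| Succ : code
| Proj (i : nat) : code
| Comp (f : code) (gs : list code) : code
| Rec (f g : code) : code
| Mu (f : code) : code.

Inductive eval : code -> list nat -> nat -> Prop :=
| eZero v : eval Zero v 0
| eSucc x v : eval Succ (x :: v) (S x)
| eProj i v : i < length v -> eval (Proj i) v (nth i v 0)
| eComp f gs v ws y : evals gs v ws -> eval f ws y -> eval (Comp f gs) v y
| eRec0 f g v y : eval f v y -> eval (Rec f g) (0 :: v) y
| eRecS f g n v r y :
    eval (Rec f g) (n :: v) r -> eval g (n :: r :: v) y ->
    eval (Rec f g) (S n :: v) y
| eMu f v n :
    eval f (n :: v) 0 ->
    (forall m, m < n -> exists k, eval f (m :: v) (S k)) ->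
    eval (Mu f) v n
with evals : list code -> list nat -> list nat -> Prop :=
| evNil v : evals [] v []
| evCons g gs v w ws : eval g v w -> evals gs v ws -> evals (g :: gs) v (w :: ws).

(** A unary partial function on omega, as a graph: [f x y] means f(x) = y. *)
Definition pfun := nat -> nat -> Prop.

Definition partial_computable1 (f : pfun) : Prop :=
  exists c : code, forall x y, f x y <-> eval c [x] y.

Definition computable_enumeration (psi : nat -> pfun) : Prop :=
  exists c : code, forall x y z, psi x y z <-> eval c [x; y] z.

Definition enumerates_without_repetitions (psi : nat -> pfun) : Prop :=
  (forall x, partial_computable1 (psi x)) /\
  (forall f, partial_computable1 f ->
     exists! x, forall y z, psi x y z <-> f y z).

Definition is_pca (psi : nat -> pfun) : Prop :=
  exists k s : nat,
    (forall a b, exists ka, psi k a ka /\ psi ka b a) /\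
    (forall a b, exists sa sab, psi s a sa /\ psi sa b sab) /\
    (forall a b c sa sab, psi s a sa -> psi sa b sab ->
       forall e, psi sab c e <->
         (exists u v, psi a c u /\ psi b c v /\ psi u v e)).

(* Given k and s, the index t_x := s (k (k 0)) (s (k x) (k x)) is a total computable
   function of x, and t_x c ~ 0 if x x is defined, undefined otherwise.  So t_x indexes
   either the constant 0 or the empty function, and without repetitions the latter has
   a single index Z.  Then {x | x x undefined} = {x | t_x = Z} is the domain of a
   partial computable function, which the usual diagonal argument forbids. *)
From Stdlib Require Import Arith List Lia.
Import ListNotations.

(* Structural recursion on the derivation, since the [Mu] premise on smaller
   arguments sits under an existential and gets no hypothesis from [Scheme]. *)
Fixpoint eval_deterministic c v y (H : eval c v y) {struct H} :
  forall y', eval c v y' -> y = y'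
with evals_deterministic gs v ws (H : evals gs v ws) {struct H} :
  forall ws', evals gs v ws' -> ws = ws'.
Proof.
- destruct H as [v | x v | i v _ | f gs v ws y Hgs Hf | f g v y Hf
                 | f g n v r y Hr Hg | f v n H0 Hlt]; intros y' H'.
  + inversion H'; reflexivity.
  + inversion H'; reflexivity.
  + inversion H'; reflexivity.
  + inversion H' as [| | | f' gs' v' ws' y'' Hgs' Hf' | | |]; subst.
    rewrite (evals_deterministic _ _ _ Hgs _ Hgs') in Hf.
    exact (eval_deterministic _ _ _ Hf _ Hf').
  + inversion H' as [| | | | f' g' v' y'' Hf' | |]; subst.
    exact (eval_deterministic _ _ _ Hf _ Hf').
  + inversion H' as [| | | | | f' g' n' v' r' y'' Hr' Hg' |]; subst.
    rewrite (eval_deterministic _ _ _ Hr _ Hr') in Hg.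
    exact (eval_deterministic _ _ _ Hg _ Hg').
  + inversion H' as [| | | | | | f' v' n' H0' Hlt']; subst.
    destruct (Nat.lt_trichotomy n y') as [Hl | [Hl | Hl]]; [| exact Hl |].
    * destruct (Hlt' n Hl) as [k Hk].
      discriminate (eval_deterministic _ _ _ H0 _ Hk).
    * destruct (Hlt y' Hl) as [k Hk].
      discriminate (eval_deterministic _ _ _ Hk _ H0').
- destruct H as [v | g gs v w ws Hg Hgs]; intros ws' H'.
  + inversion H'; reflexivity.
  + inversion H' as [| g' gs' v' w' ws'' Hg' Hgs']; subst.
    f_equal; [exact (eval_deterministic _ _ _ Hg _ Hg')
             | exact (evals_deterministic _ _ _ Hgs _ Hgs')].
Qed.

Lemma eval_Proj0 x : eval (Proj 0) [x] x.
Proof. apply (eProj 0 [x]); simpl; lia. Qed.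

Lemma eval_Comp1 f g v a y : eval g v a -> eval f [a] y -> eval (Comp f [g]) v y.
Proof. intros; econstructor; [repeat constructor |]; eassumption. Qed.

Lemma eval_Comp2 f g1 g2 v a b y :
  eval g1 v a -> eval g2 v b -> eval f [a; b] y -> eval (Comp f [g1; g2]) v y.
Proof. intros; econstructor; [repeat constructor |]; eassumption. Qed.

Fixpoint const_code (n : nat) : code :=
  match n with 0 => Zero | S m => Comp Succ [const_code m] end.

Lemma eval_const_code n v : eval (const_code n) v n.
Proof.
  induction n; simpl; [constructor |].
  eapply eval_Comp1; [exact IHn | constructor].
Qed.

Definition pred_code : code := Rec Zero (Proj 0).

Lemma eval_pred_code n : eval pred_code [n] (pred n).
Proof.
  induction n; [repeat constructor |].
  eapply eRecS; [exact IHn | apply (eProj 0 [n; pred n]); simpl; lia].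
Qed.

Definition sub_code : code := Rec (Proj 0) (Comp pred_code [Proj 1]).

Lemma eval_sub_code a b : eval sub_code [a; b] (b - a).
Proof.
  induction a.
  - constructor; rewrite Nat.sub_0_r; apply eval_Proj0.
  - eapply eRecS; [exact IHa |].
    eapply eval_Comp1; [apply (eProj 1 [a; b - a; b]); simpl; lia |].
    replace (b - S a) with (pred (b - a)) by lia; apply eval_pred_code.
Qed.

Definition add_code : code := Rec (Proj 0) (Comp Succ [Proj 1]).

Lemma eval_add_code a b : eval add_code [a; b] (a + b).
Proof.
  induction a.
  - constructor; apply eval_Proj0.
  - eapply eRecS; [exact IHa |].
    eapply eval_Comp1; [apply (eProj 1 [a; a + b; b]); simpl; lia | constructor].
Qed.

Definition dist_code : code :=
  Comp add_code [Comp sub_code [Proj 0; Proj 1]; Comp sub_code [Proj 1; Proj 0]].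

Lemma eval_dist_code a b : eval dist_code [a; b] ((b - a) + (a - b)).
Proof.
  eapply eval_Comp2; [| | apply eval_add_code];
    (eapply eval_Comp2; [| | apply eval_sub_code]);
    solve [apply (eProj 0 [a; b]); simpl; lia | apply (eProj 1 [a; b]); simpl; lia].
Qed.

(* The witness is [mu n. |g(x) - c|], which is [0] when [g(x) = c] and diverges otherwise. *)
Lemma partial_computable_level_set (g : code) (c : nat) (P : nat -> Prop) :
  (forall x, exists t, eval g [x] t /\ (t = c <-> P x)) ->
  partial_computable1 (fun x y => P x /\ y = 0).
Proof.
  intro Hg.
  set (F := Comp dist_code [const_code c; Comp g [Proj 1]]).
  assert (eval_F : forall n x t, eval g [x] t -> eval F [n; x] ((t - c) + (c - t))).
  { intros n x t Ht; eapply eval_Comp2; [apply eval_const_code | | apply eval_dist_code].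
    eapply eval_Comp1; [apply (eProj 1 [n; x]); simpl; lia | exact Ht]. }
  exists (Mu F); intros x y; destruct (Hg x) as [t [Ht HtP]]; split.
  - intros [HPx ->]; constructor; [| intros m Hm; lia].
    replace 0 with ((t - c) + (c - t)) at 2 by (apply HtP in HPx; lia).
    apply eval_F, Ht.
  - intro H; inversion H as [| | | | | | F' v n H0 Hlt]; subst.
    pose proof (eval_deterministic _ _ _ (eval_F y x t Ht) _ H0) as Hdist.
    split; [apply HtP; lia |].
    destruct y as [| m]; [reflexivity |].
    destruct (Hlt 0 ltac:(lia)) as [k Hk].
    pose proof (eval_deterministic _ _ _ (eval_F 0 x t Ht) _ Hk); lia.
Qed.

Lemma divergence_set_not_enumerated (psi : nat -> pfun) :
  (forall f, partial_computable1 f -> exists x, forall y z, psi x y z <-> f y z) ->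
  ~ partial_computable1 (fun x y => ~ (exists v, psi x x v) /\ y = 0).
Proof.
  intros Hall Hdiv.
  destruct (Hall _ Hdiv) as [e He].
  assert (Hnot : ~ exists v, psi e e v).
  { intros [v Hv]; pose proof Hv as Hdiv_e; apply He in Hdiv_e as [Hn _]; eauto. }
  apply Hnot; exists 0; apply He; auto.
Qed.

Section Enumeration.

Variable psi : nat -> pfun.
Variable psi_code : code.
Hypothesis eval_psi_code : forall x y z, psi x y z <-> eval psi_code [x; y] z.

Lemma psi_functional x y z1 z2 : psi x y z1 -> psi x y z2 -> z1 = z2.
Proof. rewrite !eval_psi_code; intros H1 H2; exact (eval_deterministic _ _ _ H1 _ H2). Qed.

Definition app_code (f g : code) : code := Comp psi_code [f; g].

Lemma eval_app_code f g v a b y :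
  eval f v a -> eval g v b -> psi a b y -> eval (app_code f g) v y.
Proof. intros Ha Hb Hy; eapply eval_Comp2; [exact Ha | exact Hb | apply eval_psi_code, Hy]. Qed.

Section Combinators.

Variables k s : nat.
Hypothesis k_total : forall a b, exists ka, psi k a ka /\ psi ka b a.
Hypothesis s_total : forall a b, exists sa sab, psi s a sa /\ psi sa b sab.
Hypothesis s_spec : forall a b c sa sab, psi s a sa -> psi sa b sab ->
  forall e, psi sab c e <-> (exists u v, psi a c u /\ psi b c v /\ psi u v e).

Lemma k_app a b ka : psi k a ka -> psi ka b a.
Proof.
  intro Hka; destruct (k_total a b) as [ka' [Hka' Hb]].
  rewrite (psi_functional _ _ _ _ Hka Hka'); exact Hb.
Qed.

Definition self_app_code : code :=
  let kx := app_code (const_code k) (Proj 0) in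
  app_code (app_code (const_code s) kx) kx.

Lemma eval_self_app_code x :
  exists b, eval self_app_code [x] b /\ forall c e, psi b c e <-> psi x x e.
Proof.
  destruct (k_total x 0) as [kx [Hkx _]].
  destruct (s_total kx kx) as [sa [b [Hsa Hb]]].
  assert (eval_kx : eval (app_code (const_code k) (Proj 0)) [x] kx)
    by (eapply eval_app_code; [apply eval_const_code | apply eval_Proj0 | exact Hkx]).
  exists b; split.
  - eapply eval_app_code; [| exact eval_kx | exact Hb].
    eapply eval_app_code; [apply eval_const_code | exact eval_kx | exact Hsa].
  - intros c e; rewrite (s_spec _ _ c _ _ Hsa Hb e); pose proof (k_app x c kx Hkx) as Hx.
    split.
    + intros [u [v [Hu [Hv He]]]].
      rewrite (psi_functional _ _ _ _ Hu Hx), (psi_functional _ _ _ _ Hv Hx) in He; exact He.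
    + intro He; exists x, x; auto.
Qed.

Lemma halting_indicator_code :
  exists T : code, forall x, exists t, eval T [x] t /\
    forall c e, psi t c e <-> (exists v, psi x x v) /\ e = 0.
Proof.
  destruct (k_total 0 0) as [k0 [Hk0 _]].
  destruct (k_total k0 0) as [kk0 [Hkk0 _]].
  destruct (s_total kk0 0) as [skk0 [_ [Hskk0 _]]].
  exists (app_code (const_code skk0) self_app_code); intro x.
  destruct (eval_self_app_code x) as [b [Hb_eval Hb]].
  destruct (s_total kk0 b) as [skk0' [t [Hskk0' Ht]]].
  rewrite (psi_functional _ _ _ _ Hskk0' Hskk0) in Ht.
  exists t; split; [eapply eval_app_code; [apply eval_const_code | exact Hb_eval | exact Ht] |].
  intros c e; rewrite (s_spec _ _ c _ _ Hskk0 Ht e); split.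
  - intros [u [v [Hu [Hv He]]]].
    rewrite (psi_functional _ _ _ _ Hu (k_app _ c _ Hkk0)) in He.
    split; [exists v; apply Hb with c, Hv |].
    exact (psi_functional _ _ _ _ He (k_app _ v _ Hk0)).
  - intros [[v Hv] ->]; exists k0, v.
    split; [apply k_app, Hkk0 |]; split; [apply Hb, Hv | apply k_app, Hk0].
Qed.

End Combinators.
End Enumeration.

Lemma empty_partial_computable : partial_computable1 (fun _ _ => False).
Proof.
  exists (Mu Succ); intros x y; split; [contradiction |].
  intro H; inversion H as [| | | | | | f v n H0 _]; inversion H0.
Qed.

Theorem mainTheorem9 :
  ~ exists psi : nat -> pfun,
      computable_enumeration psi /\
      enumerates_without_repetitions psi /\
      is_pca psi.
Proof.
  intros [psi [[c Hc] [[_ Hall] [k [s [Hk [Hs1 Hs2]]]]]]].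
  destruct (Hall _ empty_partial_computable) as [Z [HZ HZ_unique]].
  destruct (halting_indicator_code psi c Hc k s Hk Hs1 Hs2) as [T HT].
  apply (divergence_set_not_enumerated psi).
  - intros f Hf; destruct (Hall f Hf) as [x [Hx _]]; eauto.
  - apply (partial_computable_level_set T Z); intro x.
    destruct (HT x) as [t [Ht Htc]]; exists t; split; [exact Ht |]; split.
    + intros -> [v Hv]; apply (HZ 0 0), Htc; eauto.
    + intro Hdiv; symmetry; apply HZ_unique; intros y z; split; [| contradiction].
      intro Htz; apply Htc in Htz as [Hconv _]; auto.
Qed.
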